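(* Let $M$ be a principally Goldie*-lifting right $R$-module having the summand sum property. Then every direct summand of $M$ is principally Goldie*-lifting.
   Context: $R$ is an associative ring with identity; modules are unital right $R$-modules. $M$ has the summand sum property (SSP) if the sum of any two direct summands of $M$ is a direct summand of $M$. $K\ll L$ means $K$ is small in $L$. For submodules $X,Y$ of a module $L$, $X\,\beta^*\,Y$ means $(X+Y)/X\ll L/X$ and $(X+Y)/Y\ll L/Y$. A module $L$ is principally Goldie*-lifting if for every cyclic submodule $X$ of $L$ there is a direct summand $D$ of $L$ with $X\,\beta^*\,D$. *)

(* Right R-modules are modelled as left modules over the
   converse ring R^c: for x : M and r : R, the right action x r is r *: x. *)
From HB Require Import structures.
From mathcomp Require Import all_boot all_order all_algebra.
Set Implicit Arguments. Unset Strict Implicit. Unset Printing Implicit Defensive.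
Import GRing.Theory.
Local Open Scope ring_scope.

Section ModuleDefs.
Variable R : pzRingType.
Variable M : lmodType R^c.

Definition msub := M -> Prop.

Definition incl (X Y : msub) := forall x, X x -> Y x.
Definition meq (X Y : msub) := forall x, X x <-> Y x.

Definition is_submodule (X : msub) : Prop :=
  X 0 /\ (forall x y, X x -> X y -> X (x + y)) /\
  (forall (r : R^c) x, X x -> X (r *: x)).

Definition msum (X Y : msub) : msub :=
  fun z => exists x y, X x /\ Y y /\ z = x + y.

Definition mfull : msub := fun _ => True.

Definition direct_summand_of (L D : msub) : Prop :=
  is_submodule D /\ incl D L /\
  exists E, is_submodule E /\ incl E L /\ meq (msum D E) L /\
            (forall z, D z -> E z -> z = 0).

Definition cyclic_sub_of (L X : msub) : Prop :=
  exists x, L x /\ meq X (fun z => exists r : R^c, z = r *: x).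

(* K/X << L/X, for submodules X <= K <= L of M, unfolded through the
   correspondence between submodules of L/X and submodules N with X <= N <= L:
   every submodule N/X of L/X with K/X + N/X = L/X equals L/X. *)
Definition small_mod (L X K : msub) : Prop :=
  forall N, is_submodule N -> incl X N -> incl N L ->
    meq (msum K N) L -> meq N L.

Definition beta_star (L X Y : msub) : Prop :=
  small_mod L X (msum X Y) /\ small_mod L Y (msum X Y).

Definition pG_lifting (L : msub) : Prop :=
  forall X, is_submodule X -> cyclic_sub_of L X ->
    exists D, direct_summand_of L D /\ beta_star L X D.

Definition SSP : Prop :=
  forall D1 D2, direct_summand_of mfull D1 -> direct_summand_of mfull D2 ->
    direct_summand_of mfull (msum D1 D2).

End ModuleDefs.

(* Write M = N (+) E.  Given a cyclic X <= N, lift it in M to a summand D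
   with X beta* D.  By SSP, D + E is a summand of M, say with complement F,
   and the modular law splits N as (N /\ (D + E)) (+) (N /\ (F + E)).
   Projecting onto N along E carries the smallness conditions in M/X and M/D
   to N/X and N/(N /\ (D + E)), so X beta* (N /\ (D + E)) inside N. *)
From HB Require Import structures.
From mathcomp Require Import all_boot all_order all_algebra.
Import GRing.Theory.
Local Open Scope ring_scope.
Set Implicit Arguments. Unset Strict Implicit.

Section Submodules.
Variable R : pzRingType.
Variable M : lmodType R^c.
Implicit Types L N E P F X Y A K : msub M.

Definition mcap X Y : msub M := fun z => X z /\ Y z.

Definition complements L X Y : Prop :=
  [/\ is_submodule X, is_submodule Y, meq (msum X Y) L
    & forall z, X z -> Y z -> z = 0].

Lemma submodule0 X : is_submodule X -> X 0.
Proof. by case. Qed.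

Lemma submoduleD X x y : is_submodule X -> X x -> X y -> X (x + y).
Proof. by case=> _ [HD _]; apply: HD. Qed.

Lemma submoduleN X x : is_submodule X -> X x -> X (- x).
Proof. by case=> _ [_ HZ] Hx; rewrite -scaleN1r; apply: HZ. Qed.

Lemma submoduleB X x y : is_submodule X -> X x -> X y -> X (x - y).
Proof. by move=> HX Hx Hy; apply: submoduleD => //; apply: submoduleN. Qed.

Lemma mcap_submodule X Y :
  is_submodule X -> is_submodule Y -> is_submodule (mcap X Y).
Proof.
move=> [X0 [XD XZ]] [Y0 [YD YZ]]; split; [by [] | split].
- by move=> x y [Xx Yx] [Xy Yy]; split; [apply: XD | apply: YD].
- by move=> r x [Xx Yx]; split; [apply: XZ | apply: YZ].
Qed.

Lemma msum_submodule X Y :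
  is_submodule X -> is_submodule Y -> is_submodule (msum X Y).
Proof.
move=> HX HY; split; [|split].
- by exists 0, 0; do !split; [exact: submodule0 | exact: submodule0 | rewrite addr0].
- move=> _ _ [x1 [y1 [X1 [Y1 ->]]]] [x2 [y2 [X2 [Y2 ->]]]].
  exists (x1 + x2), (y1 + y2); split; first exact: submoduleD.
  by split; [apply: submoduleD | rewrite addrACA].
- move=> r _ [x [y [Xx [Yy ->]]]]; exists (r *: x), (r *: y).
  case: HX HY => _ [_ XZ] [_ [_ YZ]].
  by rewrite scalerDr; do !split; [apply: XZ | apply: YZ].
Qed.

Lemma msum_incll X Y : is_submodule Y -> incl X (msum X Y).
Proof. by move=> HY x Xx; exists x, 0; do !split=> //; [exact: submodule0 | rewrite addr0]. Qed.

Lemma msum_inclr X Y : is_submodule X -> incl Y (msum X Y).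
Proof. by move=> HX y Yy; exists 0, y; do !split=> //; [exact: submodule0 | rewrite add0r]. Qed.

Lemma direct_summandP L X :
  direct_summand_of L X <-> exists Y, complements L X Y.
Proof.
split=> [[HX [_ [Y [HY [_ [XY XY0]]]]]] | [Y [HX HY XY XY0]]].
  by exists Y; split.
split=> //; split; first by move=> x /(msum_incll HY) /XY.
by exists Y; do !split=> //; move=> y /(msum_inclr HX) /XY.
Qed.

Lemma complementsC L X Y : complements L X Y -> complements L Y X.
Proof.
move=> [HX HY XY XY0]; split=> // [z|z Yz Xz]; last exact: XY0.
have swap W V w : msum W V w -> msum V W w.
  by move=> [a [b [Aa [Bb ->]]]]; exists b, a; rewrite addrC.
by split=> [/swap/XY | /XY/swap].
Qed.

(* Dedekind's modular law, for M = N (+) E and E <= P. *)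
Lemma complements_mcap N E P F :
  complements (@mfull R M) N E -> incl E P -> complements (@mfull R M) P F ->
  complements N (mcap N P) (mcap N (msum F E)).
Proof.
move=> [HN HE NE NE0] EP [HP HF PF PF0].
split; [exact: mcap_submodule | exact/mcap_submodule/msum_submodule | move=> n | ].
- split=> [[a [b [[Na _] [[Nb _] ->]]]] | Nn]; first exact: submoduleD.
  have [p [f [Pp [Ff Hn]]]] := proj2 (PF n) I.
  have [np [ep [Nnp [Eep Hp]]]] := proj2 (NE p) I.
  have [nf [ef [Nnf [Eef Hf]]]] := proj2 (NE f) I.
  rewrite {}Hp in Pp Hn; rewrite {}Hf in Ff Hn; rewrite {}Hn in Nn *.
  have Hsplit : np + ep + (nf + ef) - (np + nf) = 0.
    apply: NE0; first by apply: submoduleB => //; apply: submoduleD.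
    by rewrite addrACA [_ + (ep + ef)]addrC addrK; apply: submoduleD.
  exists np, nf; split.
    split=> //; rewrite -(addrK ep np); apply: submoduleB => //; exact: EP.
  split; last by move/eqP: Hsplit; rewrite subr_eq0 => /eqP.
  split=> //; exists (nf + ef), (- ef); split=> //; split; first exact: submoduleN.
  by rewrite addrK.
- move=> z [Nz Pz] [_ [f [e [Ff [Ee Hz]]]]].
  have f0 : f = 0.
    apply: PF0 => //; rewrite -(addrK e f) -Hz; apply: submoduleB => //; exact: EP.
  by move: Hz; rewrite f0 add0r => Hz; apply: NE0; rewrite Hz in Nz *.
Qed.

(* Projection onto N along E transports smallness from M to N. *)
Lemma small_mod_complements N E A A' K K' :
  complements (@mfull R M) N E -> small_mod (@mfull R M) A K ->
  incl A (msum A' E) -> incl K' (msum K E) -> small_mod N A' K'.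
Proof.
move=> [HN HE NE NE0] HAK AA' K'K Y HY A'Y YN K'Y z.
split=> [|Nz]; first exact: YN.
have HYE : meq (msum Y E) (@mfull R M).
  apply: HAK => // [|a|m]; first exact: msum_submodule.
  - move=> /AA' [a' [e [A'a' [Ee ->]]]]; exists a', e; split=> //; exact: A'Y.
  - split=> // _; have [p [e [Np [Ee ->]]]] := proj2 (NE m) I.
    have [k' [y [K'k' [Yy ->]]]] := proj2 (K'Y p) Np.
    have [k [e' [Kk [Ee' ->]]]] := K'K k' K'k'.
    exists k, (y + (e' + e)); split=> //; split; last by rewrite !addrA [k + e' + y]addrAC.
    by exists y, (e' + e); split=> //; split=> //; apply: submoduleD.
have [y [e [Yy [Ee Hz]]]] := proj2 (HYE z) I.
have e0 : e = 0.
  have -> : e = z - y by rewrite Hz addrC addKr.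
  by apply: NE0; [apply: submoduleB => //; exact: YN | rewrite Hz addrC addKr].
by rewrite Hz e0 addr0.
Qed.

End Submodules.

Theorem proposition3p12 (R : pzRingType) (M : lmodType R^c) :
  pG_lifting (@mfull R M) -> SSP M ->
  forall N : msub M, direct_summand_of (@mfull R M) N -> pG_lifting N.
Proof.
move=> liftM ssp N /direct_summandP [E NE] X HX [x [_ Xx]].
have [D [sumD [smallX smallD]]] : exists D, direct_summand_of (@mfull R M) D /\
    beta_star (@mfull R M) X D by apply: liftM => //; exists x.
have [_ HE NEfull _] := NE; have HD : is_submodule D by case: sumD.
have sumE : direct_summand_of (@mfull R M) E.
  by apply/direct_summandP; exists N; exact: complementsC.
have /direct_summandP [F DEF] := ssp D E sumD sumE.
have EDE : incl E (msum D E) by exact: msum_inclr.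
exists (mcap N (msum D E)); split.
  by apply/direct_summandP; exists (mcap N (msum F E)); exact: complements_mcap DEF.
have K'K : incl (msum X (mcap N (msum D E))) (msum (msum X D) E).
  move=> _ [a [_ [Xa [[_ [d [e [Dd [Ee ->]]]]] ->]]]].
  by exists (a + d), e; rewrite addrA; split=> //; exists a, d.
split.
  by apply: (small_mod_complements NE smallX _ K'K); exact: msum_incll.
apply: (small_mod_complements NE smallD _ K'K) => d Dd.
have [n [e [Nn [Ee Hd]]]] := proj2 (NEfull d) I.
exists n, e; split; last by split.
split=> //; exists d, (- e); split=> //.
by split; [apply: submoduleN | rewrite Hd addrK].
Qed.
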